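(* Let $m\ge 2$, $d\ge1$ be integers, $n=md$, $a,c>0$. Let $G$ be the $n\times n$ matrix with $G_{ij}=\frac{n^2-1-6|i-j|(n-|i-j|)}{12cn}$ and let $s=-a\sum_{k=1}^m e_{1+(k-1)d}\in\mathbb R^n$. Then for all $i=1,\dots,d$ and $k=1,\dots,m$, $$(Gs)_{i+(k-1)d}=\mathsf n_i:=-\frac{a}{12cn}\Bigl(n(6+d)+5m+6mi(i-d-2)\Bigr),$$ i.e. $Gs$ is the vector $(\mathsf n,\mathsf n,\dots,\mathsf n)$ consisting of $m$ copies of $\mathsf n=(\mathsf n_1,\dots,\mathsf n_d)$. Moreover, with $\Pi$ the $n\times\binom m2$ matrix whose columns are $\sqrt{a/m}\,(e_{1+(i-1)d}-e_{1+(j-1)d})$, $1\le i<j\le m$, and $M=G-G\Pi(I+\Pi^\top G\Pi)^{-1}\Pi^\top G$, one has $Ms=Gs$.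
   Context: $e_j$ is the $j$-th standard basis vector of $\mathbb R^n$; $I$ is the identity of size $\binom m2$. ($G$ is the group inverse of the Laplacian of the $n$-cycle with all conductances $c$.) *)

From HB Require Import structures.
From mathcomp Require Import all_boot all_order all_algebra.
Set Implicit Arguments. Unset Strict Implicit. Unset Printing Implicit Defensive.
Import Order.TTheory GRing.Theory Num.Theory.
Local Open Scope ring_scope.

(* distance |i - j| between two naturals (0-based indices; same as 1-based) *)
Definition distn (i j : nat) : nat := `|(i%:Z - j%:Z)%R|%N.

Definition Gcyc (R : numFieldType) (n : nat) (c : R) : 'M[R]_n :=
  \matrix_(i < n, j < n)
    ((n%:R ^+ 2 - 1 - 6%:R * (distn i j)%:R * (n%:R - (distn i j)%:R))
       / (12%:R * c * n%:R)).

Definition ebasis (R : numFieldType) (n j : nat) : 'cV[R]_n :=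
  \col_(p < n) (if val p == j then 1 else 0).

(* s = - a * sum_{k=1}^m e_{1+(k-1)d}  (0-based: e_{k d}, k < m) *)
Definition svec (R : numFieldType) (m d : nat) (a : R) : 'cV[R]_(m * d) :=
  - a *: \sum_(k < m) ebasis R (m * d) (k * d).

(* index set of pairs 1 <= i < j <= m (0-based), of cardinality 'C(m,2) *)
Definition pairs (m : nat) : {set 'I_m * 'I_m} := [set ij : 'I_m * 'I_m | (val ij.1 < val ij.2)%N].

Definition Pimx (R : rcfType) (m d : nat) (a : R) : 'M[R]_(m * d, #|pairs m|) :=
  \matrix_(p < m * d, q < #|pairs m|)
    (Num.sqrt (a / m%:R) *
      (ebasis R (m * d) ((enum_val q).1 * d) p 0
       - ebasis R (m * d) ((enum_val q).2 * d) p 0)).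

Definition Mmx (R : rcfType) (m d : nat) (a c : R) : 'M[R]_(m * d) :=
  let G := Gcyc (m * d) c in
  let P := Pimx m d a in
  G - G *m P *m invmx (1%:M + P^T *m G *m P) *m P^T *m G.

(* n_i for 1-based i *)
Definition nn (R : numFieldType) (m d : nat) (a c : R) (i : nat) : R :=
  let n := (m * d)%N in
  - (a / (12%:R * c * n%:R)) *
    (n%:R * (6%:R + d%:R) + 5%:R * m%:R
     + 6%:R * m%:R * i%:R * (i%:R - d%:R - 2%:R)).

From HB Require Import structures.
From mathcomp Require Import all_boot all_order all_algebra.
From mathcomp Require Import zify ring.
Import Order.TTheory GRing.Theory Num.Theory.
Local Open Scope ring_scope.
Set Implicit Arguments. Unset Strict Implicit. Unset Printing Implicit Defensive.

(* The entry G_uv depends only on t = |u - v| through the quadratic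
   Gnum n t = n^2 - 1 - 6 t (n - t), which is invariant under t |-> n - t.
   Hence G is circulant, and the entry of G s at position i + k d is a sum of
   Gnum over the points i + j d, j < m, covering one full period; summing the
   quadratic in j gives n_i.  In particular G s takes the same value n_1 at all
   positions k d, so Pi^T G s = 0 (the columns of Pi are differences of the
   corresponding basis vectors) and the correction term of M vanishes on s. *)

Lemma sum_ebasis_mul (R : numFieldType) n x (F : 'I_n -> R) (hx : (x < n)%N) :
  \sum_p ebasis R n x p 0 * F p = F (Ordinal hx).
Proof.
rewrite (bigD1 (Ordinal hx)) //= big1 ?addr0; first by rewrite mxE eqxx mul1r.
move=> q hq; rewrite mxE; case: eqP => [qx|_]; last by rewrite mul0r.
by move: hq; rewrite (_ : q = Ordinal hx) ?eqxx //; apply: val_inj.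
Qed.

Definition Gnum (R : pzRingType) (n : nat) (t : R) : R :=
  n%:R ^+ 2 - 1 - 6%:R * t * (n%:R - t).

Lemma Gnum_sym (R : comPzRingType) n (t : R) : Gnum n (n%:R - t) = Gnum n t.
Proof. by rewrite /Gnum; ring. Qed.

Lemma Gcyc_mul_svec (R : numFieldType) m d (a c : R) (p : 'I_(m * d)) :
  (0 < d)%N ->
  (Gcyc (m * d) c *m svec m d a) p 0 =
  - a * \sum_(k < m) Gnum (m * d) `|p%:R - (k * d)%:R| / (12%:R * c * (m * d)%:R).
Proof.
move=> d_gt0; rewrite /svec -scalemxAr mulmx_sumr mxE summxE.
congr (_ * _); apply: eq_bigr => k _.
have kd_lt : (k * d < m * d)%N by rewrite ltn_pmul2r.
rewrite mxE (eq_bigr (fun j => ebasis R (m * d) (k * d) j 0 * Gcyc (m * d) c p j)).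
  by rewrite (sum_ebasis_mul _ kd_lt) mxE /distn natr_absz intr_norm rmorphB.
by move=> j _; rewrite mulrC.
Qed.

Definition cycsub (m k0 k : nat) : nat :=
  if (k <= k0)%N then (k0 - k)%N else (k0 + m - k)%N.

Lemma cycsub_lt m k0 k : (k0 < m)%N -> (k < m)%N -> (cycsub m k0 k < m)%N.
Proof. by move=> k0_lt k_lt; rewrite /cycsub; case: (leqP k k0) => ?; lia. Qed.

Definition cycsub_ord m (k0 k : 'I_m) : 'I_m :=
  Ordinal (cycsub_lt (ltn_ord k0) (ltn_ord k)).

Lemma cycsub_ord_inj m (k0 : 'I_m) : injective (cycsub_ord k0).
Proof.
move=> k1 k2 /(congr1 val) /=; rewrite /cycsub => eq12; apply: val_inj => /=.
have := ltn_ord k1; have := ltn_ord k2; have := ltn_ord k0.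
by move: eq12; case: (leqP k1 k0); case: (leqP k2 k0); lia.
Qed.

Lemma sum_cycsub (R : nmodType) m (k0 : 'I_m) (F : nat -> R) :
  \sum_(k < m) F (cycsub m k0 k) = \sum_(j < m) F j.
Proof. by rewrite [RHS](reindex_inj (@cycsub_ord_inj m k0)). Qed.

Lemma Gnum_dist (R : numDomainType) m d i k0 k :
  (i < d)%N -> (k0 < m)%N -> (k < m)%N ->
  Gnum (m * d) `|(i + k0 * d)%:R - (k * d)%:R| =
  Gnum (m * d) ((i + cycsub m k0 k * d)%:R : R).
Proof.
move=> i_lt k0_lt k_lt; rewrite /cycsub; case: leqP => k_k0.
  rewrite ger0_norm; last by rewrite subr_ge0 ler_nat; nia.
  by congr Gnum; rewrite !natrD !natrM natrB //; ring.
rewrite ler0_norm; last by rewrite subr_le0 ler_nat; nia.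
rewrite -Gnum_sym; congr Gnum.
by rewrite !natrD !natrM natrB ?natrD; [ring | lia].
Qed.

Lemma sum_quadratic (R : comPzRingType) (A B C : R) m :
  6%:R * \sum_(j < m) (A + B * j%:R + C * j%:R ^+ 2) =
  6%:R * m%:R * A + 3%:R * B * m%:R * (m%:R - 1)
  + C * m%:R * (m%:R - 1) * (2%:R * m%:R - 1).
Proof.
elim: m => [|m IH]; first by rewrite big_ord0; ring.
by rewrite big_ord_recr /= mulrDr IH -natr1; ring.
Qed.

Lemma Gcyc_mul_svec_block (R : numFieldType) m d (a c : R)
    (i : 'I_d) (k0 : 'I_m) (p : 'I_(m * d)) :
  0 < c -> val p = (i + k0 * d)%N ->
  (Gcyc (m * d) c *m svec m d a) p 0 = nn m d a c i.+1.
Proof.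
move=> c_gt0 p_eq.
have d_gt0 : (0 < d)%N by have := ltn_ord i; lia.
have m_gt0 : (0 < m)%N by have := ltn_ord k0; lia.
rewrite Gcyc_mul_svec // p_eq.
under eq_bigr => k _ do rewrite Gnum_dist //.
rewrite -mulr_suml (sum_cycsub k0 (fun j => Gnum (m * d) ((i + j * d)%:R : R))).
set A := (m * d)%:R ^+ 2 - 1 - 6%:R * i%:R * ((m * d)%:R - i%:R) : R.
set B := - 6%:R * d%:R * ((m * d)%:R - 2%:R * i%:R) : R.
set C := 6%:R * d%:R ^+ 2 : R.
have Gnum_in_j j : Gnum (m * d) ((i + j * d)%:R : R) = A + B * j%:R + C * j%:R ^+ 2.
  by rewrite /Gnum /A /B /C !natrD !natrM; ring.
under eq_bigr => j _ do rewrite Gnum_in_j.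
have sum6 := sum_quadratic A B C m.
set S := \sum_(j < m) _ in sum6 *.
have -> : S = (6%:R * S) / 6%:R by field.
rewrite sum6 /nn /A /B /C !natrM -natr1.
have c_neq0 : c != 0 by rewrite gt_eqF.
have m_neq0 : m%:R != 0 :> R by rewrite pnatr_eq0 -lt0n.
have d_neq0 : d%:R != 0 :> R by rewrite pnatr_eq0 -lt0n.
by field; rewrite ?pnatr_eq0 ?c_neq0 ?m_neq0 ?d_neq0; lia.
Qed.

Lemma trPimx_mul_eq0 (R : rcfType) m d (a x : R) (g : 'cV[R]_(m * d)) :
  (0 < d)%N ->
  (forall (k : 'I_m) (hk : (k * d < m * d)%N), g (Ordinal hk) 0 = x) ->
  (Pimx m d a)^T *m g = 0.
Proof.
move=> d_gt0 g_const; apply/matrixP => q j; rewrite (ord1 j) [LHS]mxE [RHS]mxE.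
set k1 := (enum_val q).1; set k2 := (enum_val q).2.
have k1d_lt : (k1 * d < m * d)%N by rewrite ltn_pmul2r.
have k2d_lt : (k2 * d < m * d)%N by rewrite ltn_pmul2r.
under eq_bigr => p _ do rewrite mxE [Pimx _ _ _ _ _]mxE mulrBr mulrBl -!mulrA.
rewrite sumrB -!mulr_sumr (sum_ebasis_mul _ k1d_lt) (sum_ebasis_mul _ k2d_lt).
by rewrite !g_const subrr.
Qed.

Lemma Mmx_mul_eq_Gcyc_mul (R : rcfType) m d (a c : R) (v : 'cV[R]_(m * d)) :
  (Pimx m d a)^T *m (Gcyc (m * d) c *m v) = 0 ->
  Mmx m d a c *m v = Gcyc (m * d) c *m v.
Proof. by move=> PGv; rewrite /Mmx mulmxBl -!mulmxA PGv !mulmx0 subr0. Qed.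

Theorem lemma4p7 (R : rcfType) (m d : nat) (a c : R) :
  (2 <= m)%N -> (1 <= d)%N -> 0 < a -> 0 < c ->
  (forall (i : 'I_d) (k : 'I_m) (p : 'I_(m * d)),
      val p = (i + k * d)%N ->
      (Gcyc (m * d) c *m svec m d a) p 0 = nn m d a c i.+1)
  /\ Mmx m d a c *m svec m d a = Gcyc (m * d) c *m svec m d a.
Proof.
move=> _ d_gt0 _ c_gt0.
have Gs_block i k p := @Gcyc_mul_svec_block R m d a c i k p c_gt0.
split; first exact: Gs_block.
apply: Mmx_mul_eq_Gcyc_mul; apply: trPimx_mul_eq0 => // k hk.
exact: (Gs_block (Ordinal d_gt0) k).
Qed.
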